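(* Let $k\in\mathbb{N}$ and let $M_\psi$ be a bounded multiplication operator on $\mathcal{L}^{(k)}$ or on $\mathcal{L}^{(k)}_0$. Then (a) $\sigma_p(M_\psi)=\psi(T)$; (b) $\sigma(M_\psi)=\overline{\psi(T)}$; (c) $\sigma_{ap}(M_\psi)=\overline{\psi(T)}$.
   Context: $T$ is a tree (locally finite, connected, simply connected graph, identified with its vertex set) without terminal vertices, rooted at $o$. $|v|$ is the distance (number of edges) from $o$ to $v$; for $v\ne o$, $v^-$ is the parent of $v$ (its neighbor on the path to $o$). $T^*=T\setminus\{o\}$, $Df(v)=|f(v)-f(v^-)|$ for $v\in T^*$. For $x\ge1$: $\ell_0(x)=1$, $\ell_1(x)=1+\ln x$, $\ell_j(x)=1+\ln\ell_{j-1}(x)$ for $j\ge2$. $\mathcal{L}^{(k)}$ is the space of $f:T\to\mathbb{C}$ with $\sup_{v\in T^*}|v|\prod_{j=0}^{k-1}\ell_j(|v|)Df(v)<\infty$, normed by $\|f\|_k=|f(o)|+\sup_{v\in T^*}|v|\prod_{j=0}^{k-1}\ell_j(|v|)Df(v)$; $\mathcal{L}^{(k)}_0$ is its subspace of $f$ with $|v|\prod_{j=0}^{k-1}\ell_j(|v|)Df(v)\to0$ as $|v|\to\infty$. $M_\psi f=\psi f$. $\sigma$, $\sigma_p$, $\sigma_{ap}$ denote the spectrum, point spectrum and approximate point spectrum of the operator on the space where it acts. *)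

From Stdlib Require Import Reals Lra ClassicalEpsilon.
From Coquelicot Require Import Coquelicot.
Open Scope R_scope.

(** A rooted tree on a vertex type [V] is given by a root [o] and a parent map
  [par]; the edges are the pairs {v, par v} for v <> o.  (The value [par o]
  is irrelevant.)  Every vertex reaches [o] by iterating [par]; this makes the
  graph connected and simply connected. *)

Definition child {V : Type} (o : V) (par : V -> V) (v w : V) : Prop :=
  w <> o /\ par w = v.

Definition is_rooted_tree {V : Type} (o : V) (par : V -> V) : Prop :=
  forall v : V, exists n : nat, Nat.iter n par v = o.

(** locally finite: every vertex has finitely many neighbours
    (equivalently finitely many children). *)
Definition locally_finite {V : Type} (o : V) (par : V -> V) : Prop :=
  forall v : V, exists l : list V, forall w, child o par v w -> List.In w l.

(** no terminal vertices: no vertex has exactly one neighbour.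
    The neighbours of [v] are its children and, if [v <> o], its parent. *)
Definition no_terminal_vertices {V : Type} (o : V) (par : V -> V) : Prop :=
  (forall v : V, v <> o -> exists w, child o par v w) /\
  ~ (exists w, child o par o w /\ forall w', child o par o w' -> w' = w).

Definition depth {V : Type} (o : V) (par : V -> V) (v : V) : nat :=
  epsilon (inhabits 0%nat)
    (fun n => Nat.iter n par v = o /\
              forall m, Nat.iter m par v = o -> (n <= m)%nat).

Fixpoint ell (j : nat) (x : R) : R :=
  match j with
  | O => 1
  | S O => 1 + ln x
  | S j' => 1 + ln (ell j' x)
  end.

Fixpoint prod_ell (k : nat) (x : R) : R :=
  match k with
  | O => 1
  | S k' => prod_ell k' x * ell k' x
  end.

Definition weight (k n : nat) : R := INR n * prod_ell k (INR n).

Definition Df {V : Type} (par : V -> V) (f : V -> C) (v : V) : R :=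
  Cmod (Cminus (f v) (f (par v))).

Definition wDf {V : Type} (o : V) (par : V -> V) (k : nat) (f : V -> C) (v : V) : R :=
  weight k (depth o par v) * Df par f v.

Definition Lk {V : Type} (o : V) (par : V -> V) (k : nat) (f : V -> C) : Prop :=
  exists B : R, forall v, v <> o -> wDf o par k f v <= B.

Definition Lk0 {V : Type} (o : V) (par : V -> V) (k : nat) (f : V -> C) : Prop :=
  Lk o par k f /\
  forall eps : R, 0 < eps -> exists N : nat, forall v, v <> o ->
    (N <= depth o par v)%nat -> wDf o par k f v < eps.

(** the norm ||f||_k = |f(o)| + sup_{v in T*} |v| prod ell_j(|v|) Df(v)
    (the sup over the empty set, T* = {}, is read as 0). *)
Definition normk {V : Type} (o : V) (par : V -> V) (k : nat) (f : V -> C) : R :=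
  Cmod (f o) + real (Lub_Rbar (fun x => exists v, v <> o /\ x = wDf o par k f v)).

Definition space {V : Type} (o : V) (par : V -> V) (k : nat) (zero : bool)
  : (V -> C) -> Prop :=
  if zero then Lk0 o par k else Lk o par k.

Definition Mult {V : Type} (psi : V -> C) (f : V -> C) : V -> C :=
  fun v => Cmult (psi v) (f v).

Definition bounded_op {V : Type} (X : (V -> C) -> Prop) (nrm : (V -> C) -> R)
  (A : (V -> C) -> (V -> C)) : Prop :=
  (forall f, X f -> X (A f)) /\
  exists Cst : R, forall f, X f -> nrm (A f) <= Cst * nrm f.

Definition linear_op {V : Type} (X : (V -> C) -> Prop) (A : (V -> C) -> (V -> C)) : Prop :=
  forall (a b : C) f g, X f -> X g -> forall v,
    A (fun u => Cplus (Cmult a (f u)) (Cmult b (g u))) v =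
    Cplus (Cmult a (A f v)) (Cmult b (A g v)).

Definition shift_op {V : Type} (A : (V -> C) -> (V -> C)) (lam : C) (f : V -> C) : V -> C :=
  fun v => Cminus (A f v) (Cmult lam (f v)).

Definition point_spectrum {V : Type} (X : (V -> C) -> Prop)
  (A : (V -> C) -> (V -> C)) (lam : C) : Prop :=
  exists f, X f /\ (exists v, f v <> RtoC 0) /\ forall v, shift_op A lam f v = RtoC 0.

Definition spectrum {V : Type} (X : (V -> C) -> Prop) (nrm : (V -> C) -> R)
  (A : (V -> C) -> (V -> C)) (lam : C) : Prop :=
  ~ exists S : (V -> C) -> (V -> C),
      bounded_op X nrm S /\ linear_op X S /\
      (forall f, X f -> forall v, S (shift_op A lam f) v = f v) /\
      (forall f, X f -> forall v, shift_op A lam (S f) v = f v).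

Definition approx_point_spectrum {V : Type} (X : (V -> C) -> Prop)
  (nrm : (V -> C) -> R) (A : (V -> C) -> (V -> C)) (lam : C) : Prop :=
  exists fs : nat -> (V -> C),
    (forall n, X (fs n)) /\ (forall n, nrm (fs n) = 1) /\
    is_lim_seq (fun n => nrm (shift_op A lam (fs n))) 0.

Definition in_closure_range {V : Type} (psi : V -> C) (lam : C) : Prop :=
  forall eps : R, 0 < eps -> exists v, Cmod (Cminus (psi v) lam) < eps.

From Stdlib Require Import Reals Lra Lia ClassicalEpsilon Classical FunctionalExtensionality List.
From Coquelicot Require Import Coquelicot.
Open Scope R_scope.

(* The indicator [chi v] of a vertex has nonzero differences only at [v] and its
   finitely many children, so it lies in L^(k)_0; it is an eigenvector of M_psi for
   psi(v), and testing boundedness on it gives |psi| <= ||M_psi||.  Normalised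
   indicators at vertices where psi(v) -> lam are approximate eigenvectors, so the
   closure of psi(T) lies in sigma_ap, hence in sigma.  Conversely, if
   |psi - lam| >= d > 0 on T, then M_(1/(psi - lam)) is a bounded inverse of
   M_psi - lam: with a = psi(u) - lam and b = psi(u^-) - lam,
     g(u)/a - g(u^-)/b
       = ((psi(u) + psi(u^-) - lam)(g(u) - g(u^-)) - (psi g(u) - psi g(u^-))) / (ab)
   bounds its differences by those of g and psi g. *)

Lemma ell_ge1 j x : 1 <= x -> 1 <= ell j x.
Proof.
  intro Hx. induction j as [|[|j] IH].
  - simpl. lra.
  - simpl. assert (0 <= ln x) by (rewrite <- ln_1; apply ln_le; lra). lra.
  - change (1 <= 1 + ln (ell (S j) x)).
    assert (0 <= ln (ell (S j) x)) by (rewrite <- ln_1; apply ln_le; lra). lra.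
Qed.

Lemma prod_ell_ge1 k x : 1 <= x -> 1 <= prod_ell k x.
Proof.
  intro Hx. induction k as [|k IH]; simpl; [lra|].
  pose proof (ell_ge1 k x Hx). nra.
Qed.

Lemma weight_pos k n : (1 <= n)%nat -> 0 < weight k n.
Proof.
  intro Hn. unfold weight.
  assert (H1 : 1 <= INR n) by (apply (le_INR 1); lia).
  pose proof (prod_ell_ge1 k _ H1). nra.
Qed.

Lemma weight_ge0 k n : 0 <= weight k n.
Proof.
  destruct n as [|n].
  - unfold weight. simpl. lra.
  - left. apply weight_pos. lia.
Qed.

Lemma iter_fixpoint {A : Type} (f : A -> A) x n : f x = x -> Nat.iter n f x = x.
Proof. intro H. induction n as [|n IH]; simpl; [|rewrite IH]; auto. Qed.

Lemma In_bounded_R {A : Type} (h : A -> R) (l : list A) :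
  exists B, forall x, In x l -> h x <= B.
Proof.
  induction l as [|y l [B HB]]; [exists 0; simpl; tauto|].
  exists (Rmax (h y) B). intros x [<-|Hx]; [apply Rmax_l|].
  eapply Rle_trans; [apply HB, Hx|apply Rmax_r].
Qed.

Lemma In_bounded_nat {A : Type} (h : A -> nat) (l : list A) :
  exists N, forall x, In x l -> (h x < N)%nat.
Proof.
  induction l as [|y l [N HN]]; [exists 0%nat; simpl; tauto|].
  exists (S (max (h y) N)). intros x [<-|Hx]; [lia|]. specialize (HN x Hx). lia.
Qed.

Lemma Cmod_minus_le (a b : C) : Cmod (a - b) <= Cmod a + Cmod b.
Proof. unfold Cminus. rewrite <- (Cmod_opp b). apply Cmod_triangle. Qed.

Lemma Cmod_diff_div_le (M d : R) (lam pu pp gu gp : C) :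
  0 < d -> d <= Cmod (pu - lam) -> d <= Cmod (pp - lam) -> Cmod pu <= M -> Cmod pp <= M ->
  Cmod (gu / (pu - lam) - gp / (pp - lam))%C <=
  ((2 * M + Cmod lam) * Cmod (gu - gp) + Cmod (pu * gu - pp * gp)) / (d * d).
Proof.
  intros Hd Hu Hp HMu HMp.
  assert (Hu0 : (pu - lam)%C <> 0) by (apply Cmod_gt_0; lra).
  assert (Hp0 : (pp - lam)%C <> 0) by (apply Cmod_gt_0; lra).
  replace (gu / (pu - lam) - gp / (pp - lam))%C with
    (((pu + pp - lam) * (gu - gp) - (pu * gu - pp * gp)) / ((pu - lam) * (pp - lam)))%C
    by (field; split; assumption).
  rewrite Cmod_div, Cmod_mult by (apply Cmult_neq_0; assumption).
  assert (Hs : Cmod (pu + pp - lam) <= 2 * M + Cmod lam).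
  { eapply Rle_trans; [apply Cmod_minus_le|].
    pose proof (Cmod_triangle pu pp). lra. }
  assert (Hnum : Cmod ((pu + pp - lam) * (gu - gp) - (pu * gu - pp * gp))
                 <= (2 * M + Cmod lam) * Cmod (gu - gp) + Cmod (pu * gu - pp * gp)).
  { eapply Rle_trans; [apply Cmod_minus_le|]. rewrite Cmod_mult.
    apply Rplus_le_compat_r, Rmult_le_compat_r; [apply Cmod_ge_0|exact Hs]. }
  unfold Rdiv. apply Rmult_le_compat; try assumption.
  - apply Cmod_ge_0.
  - left. apply Rinv_0_lt_compat. nra.
  - apply Rinv_le_contravar; nra.
Qed.

Lemma bounded_op_nonneg_const {V : Type} (X : (V -> C) -> Prop) (nrm : (V -> C) -> R)
  (A : (V -> C) -> (V -> C)) :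
  (forall f, 0 <= nrm f) -> bounded_op X nrm A ->
  exists K, 0 <= K /\ forall f, X f -> nrm (A f) <= K * nrm f.
Proof.
  intros Hnrm [_ [K HK]]. exists (Rmax K 0). split; [apply Rmax_r|].
  intros f Hf. eapply Rle_trans; [apply HK, Hf|].
  apply Rmult_le_compat_r; [apply Hnrm|apply Rmax_l].
Qed.

Lemma approx_point_spectrum_spectrum {V : Type} (X : (V -> C) -> Prop)
  (nrm : (V -> C) -> R) (A : (V -> C) -> (V -> C)) (lam : C) :
  (forall f, X f -> X (shift_op A lam f)) ->
  approx_point_spectrum X nrm A lam -> spectrum X nrm A lam.
Proof.
  intros Hshift [fs [HX [Hunit Hlim]]] [S [[_ [K HK]] [_ [Hleft _]]]].
  assert (Hge : forall n, 1 <= K * nrm (shift_op A lam (fs n))).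
  { intro n. rewrite <- (Hunit n).
    replace (fs n) with (S (shift_op A lam (fs n))) at 1
      by (apply functional_extensionality, Hleft, HX).
    apply HK, Hshift, HX. }
  apply is_lim_seq_scal_l with (a := K) in Hlim. simpl in Hlim.
  rewrite Rmult_0_r in Hlim. apply is_lim_seq_spec in Hlim.
  destruct (Hlim (mkposreal 1 Rlt_0_1)) as [N HN]. specialize (HN N (le_n N)). simpl in HN.
  specialize (Hge N). rewrite Rminus_0_r in HN. apply Rabs_def2 in HN. lra.
Qed.

Definition cscal {V : Type} (c : C) (f : V -> C) : V -> C := fun u => (c * f u)%C.

Definition chi {V : Type} (v : V) : V -> C :=
  fun u => if excluded_middle_informative (u = v) then RtoC 1 else RtoC 0.

Section WeightedSpace.

Context {V : Type} (o : V) (par : V -> V) (k : nat).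
Hypothesis Htree : is_rooted_tree o par.
Hypothesis Hlf : locally_finite o par.

Lemma depth_spec v : Nat.iter (depth o par v) par v = o.
Proof.
  assert (Hleast : exists n, Nat.iter n par v = o /\
                     forall m, Nat.iter m par v = o -> (n <= m)%nat).
  { destruct (Wf_nat.dec_inh_nat_subset_has_unique_least_element
                (fun n => Nat.iter n par v = o)) as [n [Hn _]].
    - intro n. apply classic.
    - apply Htree.
    - exists n. exact Hn. }
  exact (proj1 (epsilon_spec (inhabits 0%nat) _ Hleast)).
Qed.

Lemma depth_pos v : v <> o -> (1 <= depth o par v)%nat.
Proof.
  intro Hv. pose proof (depth_spec v) as H.
  destruct (depth o par v); [simpl in H; congruence|lia].
Qed.

Lemma par_neq v : v <> o -> par v <> v.
Proof.
  intros Hv Hfix. destruct (Htree v) as [n Hn].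
  rewrite iter_fixpoint in Hn; auto.
Qed.

Lemma wDf_ge0 f v : 0 <= wDf o par k f v.
Proof. apply Rmult_le_pos; [apply weight_ge0|apply Cmod_ge_0]. Qed.

Definition sup_wDf (f : V -> C) : R :=
  real (Lub_Rbar (fun x => exists v, v <> o /\ x = wDf o par k f v)).

Lemma normk_eq f : normk o par k f = Cmod (f o) + sup_wDf f.
Proof. reflexivity. Qed.

Lemma sup_wDf_ge0 f : 0 <= sup_wDf f.
Proof.
  unfold sup_wDf.
  destruct (Lub_Rbar_correct (fun x => exists v, v <> o /\ x = wDf o par k f v))
    as [Hub Hlub].
  destruct (Lub_Rbar _) as [l| |]; simpl; try lra.
  destruct (classic (exists v, v <> o)) as [[v Hv]|Hnone].
  - specialize (Hub _ (ex_intro _ v (conj Hv eq_refl))). simpl in Hub.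
    pose proof (wDf_ge0 f v). lra.
  - assert (Hbot : Rbar_le (Finite l) m_infty).
    { apply Hlub. intros x [v [Hv _]]. exfalso. eauto. }
    contradiction.
Qed.

Lemma normk_ge0 f : 0 <= normk o par k f.
Proof. rewrite normk_eq. pose proof (Cmod_ge_0 (f o)). pose proof (sup_wDf_ge0 f). lra. Qed.

Lemma sup_wDf_ub f v : Lk o par k f -> v <> o -> wDf o par k f v <= sup_wDf f.
Proof.
  intros [B HB] Hv. unfold sup_wDf.
  destruct (Lub_Rbar_correct (fun x => exists v, v <> o /\ x = wDf o par k f v))
    as [Hub Hlub].
  specialize (Hub _ (ex_intro _ v (conj Hv eq_refl))).
  assert (HleB : Rbar_le (Lub_Rbar (fun x => exists v, v <> o /\ x = wDf o par k f v)) B).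
  { apply Hlub. intros x [w [Hw ->]]. apply HB, Hw. }
  destruct (Lub_Rbar _); simpl in *; easy.
Qed.

Lemma sup_wDf_le f B :
  0 <= B -> (forall v, v <> o -> wDf o par k f v <= B) -> sup_wDf f <= B.
Proof.
  intros HB0 HB. unfold sup_wDf.
  assert (HleB : Rbar_le (Lub_Rbar (fun x => exists v, v <> o /\ x = wDf o par k f v)) B).
  { apply Lub_Rbar_correct. intros x [w [Hw ->]]. apply HB, Hw. }
  destruct (Lub_Rbar _); simpl in *; easy.
Qed.

Lemma space_Lk zero f : space o par k zero f -> Lk o par k f.
Proof. destruct zero; [intros [H _]|intro H]; exact H. Qed.

Lemma wDf_dominated f g h a b u :
  0 <= a -> 0 <= b -> Df par h u <= a * Df par f u + b * Df par g u ->
  wDf o par k h u <= a * wDf o par k f u + b * wDf o par k g u.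
Proof.
  intros Ha Hb H. unfold wDf. pose proof (weight_ge0 k (depth o par u)).
  replace (a * _ + b * _) with (weight k (depth o par u) * (a * Df par f u + b * Df par g u))
    by ring.
  apply Rmult_le_compat_l; assumption.
Qed.

Lemma space_dominated zero f g h a b :
  0 <= a -> 0 <= b -> space o par k zero f -> space o par k zero g ->
  (forall u, u <> o -> Df par h u <= a * Df par f u + b * Df par g u) ->
  space o par k zero h.
Proof.
  intros Ha Hb Hf Hg HD.
  assert (Hw : forall u, u <> o ->
            wDf o par k h u <= a * wDf o par k f u + b * wDf o par k g u)
    by (intros u Hu; apply wDf_dominated, HD; assumption).
  assert (HL : Lk o par k h).
  { destruct (space_Lk _ _ Hf) as [Bf HBf], (space_Lk _ _ Hg) as [Bg HBg].
    exists (a * Bf + b * Bg). intros u Hu.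
    specialize (Hw u Hu). specialize (HBf u Hu). specialize (HBg u Hu). nra. }
  destruct zero; [|exact HL]. split; [exact HL|].
  destruct Hf as [_ Hf], Hg as [_ Hg]. intros eps Heps.
  destruct (Hf (eps / (2 * (a + 1)))) as [Nf HNf]; [apply Rdiv_lt_0_compat; lra|].
  destruct (Hg (eps / (2 * (b + 1)))) as [Ng HNg]; [apply Rdiv_lt_0_compat; lra|].
  exists (max Nf Ng). intros u Hu Hd.
  specialize (HNf u Hu ltac:(lia)). specialize (HNg u Hu ltac:(lia)).
  specialize (Hw u Hu). pose proof (wDf_ge0 f u). pose proof (wDf_ge0 g u).
  assert (a * wDf o par k f u < (a + 1) * (eps / (2 * (a + 1)))) by nra.
  assert (b * wDf o par k g u < (b + 1) * (eps / (2 * (b + 1)))) by nra.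
  replace ((a + 1) * (eps / (2 * (a + 1)))) with (eps / 2) in * by (field; lra).
  replace ((b + 1) * (eps / (2 * (b + 1)))) with (eps / 2) in * by (field; lra).
  lra.
Qed.

Lemma normk_dominated f g h a b :
  0 <= a -> 0 <= b -> Lk o par k f -> Lk o par k g ->
  (forall u, u <> o -> Df par h u <= a * Df par f u + b * Df par g u) ->
  normk o par k h <= Cmod (h o) + a * sup_wDf f + b * sup_wDf g.
Proof.
  intros Ha Hb Hf Hg HD. rewrite normk_eq, Rplus_assoc. apply Rplus_le_compat_l.
  pose proof (sup_wDf_ge0 f). pose proof (sup_wDf_ge0 g).
  apply sup_wDf_le; [nra|]. intros v Hv.
  eapply Rle_trans; [apply wDf_dominated, HD; assumption|].
  pose proof (sup_wDf_ub f v Hf Hv). pose proof (sup_wDf_ub g v Hg Hv). nra.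
Qed.

Lemma Df_cscal c f u : Df par (cscal c f) u = Cmod c * Df par f u.
Proof.
  unfold Df, cscal. rewrite <- Cmod_mult. f_equal. ring.
Qed.

Lemma space_cscal zero c f : space o par k zero f -> space o par k zero (cscal c f).
Proof.
  intro Hf. apply (space_dominated zero f f _ (Cmod c) 0); auto using Cmod_ge_0; [lra|].
  intros u _. rewrite Df_cscal. lra.
Qed.

Lemma normk_cscal_le c f : Lk o par k f -> normk o par k (cscal c f) <= Cmod c * normk o par k f.
Proof.
  intro Hf. eapply Rle_trans.
  - apply (normk_dominated f f _ (Cmod c) 0); auto using Cmod_ge_0; [lra|].
    intros u _. rewrite Df_cscal. lra.
  - rewrite normk_eq. unfold cscal. rewrite Cmod_mult. lra.
Qed.

Lemma normk_cscal c f :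
  c <> RtoC 0 -> Lk o par k f -> normk o par k (cscal c f) = Cmod c * normk o par k f.
Proof.
  intros Hc Hf. apply Rle_antisym; [apply normk_cscal_le, Hf|].
  assert (Hcf : Lk o par k (cscal c f)) by exact (space_Lk false _ (space_cscal false c f Hf)).
  pose proof (normk_cscal_le (/ c) _ Hcf) as H.
  replace (cscal (/ c) (cscal c f)) with f in H
    by (apply functional_extensionality; intro u; unfold cscal; field; exact Hc).
  rewrite Cmod_inv in H by exact Hc.
  apply Cmod_gt_0 in Hc.
  apply (Rmult_le_compat_l (Cmod c)) in H; [|lra].
  rewrite <- Rmult_assoc, Rinv_r, Rmult_1_l in H; lra.
Qed.

Lemma space_finite_variation zero f (l : list V) :
  (forall u, u <> o -> ~ In u l -> Df par f u = 0) -> space o par k zero f.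
Proof.
  intro Hl.
  assert (Hout : forall u, u <> o -> ~ In u l -> wDf o par k f u = 0)
    by (intros u Hu Hn; unfold wDf; rewrite Hl by assumption; ring).
  assert (HL : Lk o par k f).
  { destruct (In_bounded_R (wDf o par k f) l) as [B HB].
    exists (Rmax B 0). intros u Hu. destruct (classic (In u l)) as [Hin|Hin].
    - eapply Rle_trans; [apply HB, Hin|apply Rmax_l].
    - rewrite Hout by assumption. apply Rmax_r. }
  destruct zero; [|exact HL]. split; [exact HL|].
  destruct (In_bounded_nat (depth o par) l) as [N HN].
  intros eps Heps. exists N. intros u Hu Hd.
  rewrite Hout; [lra|assumption|]. intro Hin. specialize (HN u Hin). lia.
Qed.

Lemma space_chi zero v : space o par k zero (chi v).
Proof.
  destruct (Hlf v) as [l Hl].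
  apply (space_finite_variation zero _ (v :: l)). intros u Hu Hin. unfold Df, chi.
  destruct (excluded_middle_informative (u = v)) as [->|Huv]; [exfalso; apply Hin; left; reflexivity|].
  destruct (excluded_middle_informative (par u = v)) as [Hpar|_].
  - exfalso. apply Hin. right. apply Hl. split; assumption.
  - replace (RtoC 0 - RtoC 0)%C with (RtoC 0) by ring. apply Cmod_0.
Qed.

Lemma normk_chi_pos v : 0 < normk o par k (chi v).
Proof.
  rewrite normk_eq. destruct (classic (v = o)) as [->|Hv].
  - unfold chi at 1. destruct (excluded_middle_informative (o = o)); [|congruence].
    rewrite Cmod_R, Rabs_R1. pose proof (sup_wDf_ge0 (chi o)). lra.
  - pose proof (sup_wDf_ub (chi v) v (space_Lk false _ (space_chi false v)) Hv).
    pose proof (Cmod_ge_0 (chi v o)).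
    enough (0 < wDf o par k (chi v) v) by lra.
    unfold wDf, Df, chi.
    destruct (excluded_middle_informative (v = v)); [|congruence].
    destruct (excluded_middle_informative (par v = v)) as [Hfix|_];
      [exfalso; exact (par_neq v Hv Hfix)|].
    replace (RtoC 1 - RtoC 0)%C with (RtoC 1) by ring. rewrite Cmod_R, Rabs_R1, Rmult_1_r.
    apply weight_pos, depth_pos, Hv.
Qed.


Definition unit_chi (v : V) : V -> C := cscal (RtoC (/ normk o par k (chi v))) (chi v).

Lemma unit_chi_supported v u : u <> v -> unit_chi v u = RtoC 0.
Proof.
  intro Huv. unfold unit_chi, cscal, chi.
  destruct (excluded_middle_informative (u = v)); [contradiction|ring].
Qed.

Lemma space_unit_chi zero v : space o par k zero (unit_chi v).
Proof. apply space_cscal, space_chi. Qed.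

Lemma normk_unit_chi v : normk o par k (unit_chi v) = 1.
Proof.
  pose proof (normk_chi_pos v) as Hpos.
  unfold unit_chi. rewrite normk_cscal.
  - rewrite Cmod_R, Rabs_pos_eq by (left; apply Rinv_0_lt_compat, Hpos).
    field. lra.
  - intro E. apply (f_equal fst) in E. simpl in E.
    pose proof (Rinv_0_lt_compat _ Hpos). lra.
  - apply (space_Lk false), space_chi.
Qed.

Section Multiplier.

Context (zero : bool) (psi : V -> C).
Hypothesis Hbdd : bounded_op (space o par k zero) (normk o par k) (Mult psi).

Lemma Mult_supported_at v f :
  (forall u, u <> v -> f u = RtoC 0) -> Mult psi f = cscal (psi v) f.
Proof.
  intro Hf. apply functional_extensionality. intro u. unfold Mult, cscal.
  destruct (classic (u = v)) as [->|Huv]; [reflexivity|]. rewrite Hf by exact Huv. ring.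
Qed.

Lemma shift_Mult_supported_at lam v f :
  (forall u, u <> v -> f u = RtoC 0) -> shift_op (Mult psi) lam f = cscal (psi v - lam)%C f.
Proof.
  intro Hf. apply functional_extensionality. intro u. unfold shift_op.
  rewrite (Mult_supported_at v f Hf). unfold cscal. ring.
Qed.

Lemma psi_bounded : exists M, forall v, Cmod (psi v) <= M.
Proof.
  destruct (bounded_op_nonneg_const _ _ _ normk_ge0 Hbdd) as [K [HK0 HK]].
  exists K. intro v.
  destruct (classic (psi v = RtoC 0)) as [E|E]; [rewrite E, Cmod_0; exact HK0|].
  pose proof (HK _ (space_unit_chi zero v)) as H.
  rewrite (Mult_supported_at v) in H by apply unit_chi_supported.
  rewrite normk_cscal, normk_unit_chi, !Rmult_1_r in H; [exact H|exact E|].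
  apply (space_Lk false), space_unit_chi.
Qed.

Lemma space_shift_Mult lam f :
  space o par k zero f -> space o par k zero (shift_op (Mult psi) lam f).
Proof.
  intro Hf.
  apply (space_dominated zero (Mult psi f) f _ 1 (Cmod lam)); auto using Cmod_ge_0;
    [lra|apply Hbdd, Hf|].
  intros u _. unfold Df, shift_op, Mult.
  replace ((psi u * f u - lam * f u) - (psi (par u) * f (par u) - lam * f (par u)))%C
    with ((psi u * f u - psi (par u) * f (par u)) - lam * (f u - f (par u)))%C by ring.
  rewrite <- Cmod_mult, Rmult_1_l. apply Cmod_minus_le.
Qed.

Lemma not_in_closure_range_sep lam :
  ~ in_closure_range psi lam -> exists d, 0 < d /\ forall v, d <= Cmod (psi v - lam).
Proof.
  intro Hn. apply NNPP. intro Hnd. apply Hn. intros eps Heps. apply NNPP. intro Hfar.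
  apply Hnd. exists eps. split; [exact Heps|]. intro v.
  apply Rnot_lt_le. intro Hlt. apply Hfar. exists v. exact Hlt.
Qed.

Lemma Df_resolvent_le M lam d g u :
  0 < d -> (forall v, d <= Cmod (psi v - lam)) -> (forall v, Cmod (psi v) <= M) ->
  Df par (Mult (fun v => / (psi v - lam))%C g) u <=
  (2 * M + Cmod lam) / (d * d) * Df par g u + 1 / (d * d) * Df par (Mult psi g) u.
Proof.
  intros Hd Hsep HM. unfold Df, Mult.
  rewrite !(Cmult_comm (/ _)). fold (Cdiv (g u) (psi u - lam)).
  fold (Cdiv (g (par u)) (psi (par u) - lam)).
  eapply Rle_trans; [apply (Cmod_diff_div_le M d); auto|].
  right. unfold Rdiv. ring.
Qed.

Lemma bounded_op_resolvent lam d :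
  0 < d -> (forall v, d <= Cmod (psi v - lam)) ->
  bounded_op (space o par k zero) (normk o par k) (Mult (fun v => / (psi v - lam))%C).
Proof.
  intros Hd Hsep.
  destruct psi_bounded as [M HM].
  destruct (bounded_op_nonneg_const _ _ _ normk_ge0 Hbdd) as [K [HK0 HK]].
  pose proof (fun g u => Df_resolvent_le M lam d g u Hd Hsep HM) as HDf.
  set (A := 2 * M + Cmod lam) in HDf.
  assert (HA : 0 <= A)
    by (pose proof (Cmod_ge_0 (psi o)); pose proof (HM o); pose proof (Cmod_ge_0 lam);
        unfold A; lra).
  assert (Hdd : 0 < / (d * d)) by (apply Rinv_0_lt_compat; nra).
  split.
  - intros g Hg. apply (space_dominated zero g (Mult psi g) _ (A / (d * d)) (1 / (d * d)));
      unfold Rdiv; auto; try nra. apply Hbdd, Hg.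
  - exists (/ d + A / (d * d) + K / (d * d)). intros g Hg.
    pose proof (space_Lk zero g Hg) as HgL.
    pose proof (space_Lk zero _ (proj1 Hbdd g Hg)) as HpgL.
    eapply Rle_trans.
    { apply (normk_dominated g (Mult psi g)); unfold Rdiv; auto; nra. }
    assert (Ho : Cmod (Mult (fun v => / (psi v - lam))%C g o) <= / d * Cmod (g o)).
    { unfold Mult. rewrite Cmod_mult, Cmod_inv
        by (apply Cmod_gt_0; specialize (Hsep o); lra).
      apply Rmult_le_compat_r; [apply Cmod_ge_0|].
      apply Rinv_le_contravar; [exact Hd|apply Hsep]. }
    assert (Hpg : sup_wDf (Mult psi g) <= K * normk o par k g).
    { eapply Rle_trans; [|apply HK, Hg]. rewrite normk_eq.
      pose proof (Cmod_ge_0 (Mult psi g o)). lra. }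
    rewrite normk_eq in *.
    set (N := Cmod (g o) + sup_wDf g) in *.
    pose proof (Cmod_ge_0 (g o)). pose proof (sup_wDf_ge0 g).
    pose proof (Rinv_0_lt_compat _ Hd).
    assert (/ d * Cmod (g o) <= / d * N) by (apply Rmult_le_compat_l; unfold N; lra).
    assert (A / (d * d) * sup_wDf g <= A / (d * d) * N)
      by (apply Rmult_le_compat_l; unfold Rdiv, N; nra).
    assert (1 / (d * d) * sup_wDf (Mult psi g) <= K / (d * d) * N)
      by (unfold Rdiv; rewrite Rmult_1_l, (Rmult_comm K), Rmult_assoc;
          apply Rmult_le_compat_l; lra).
    lra.
Qed.

Lemma spectrum_in_closure_range lam :
  spectrum (space o par k zero) (normk o par k) (Mult psi) lam -> in_closure_range psi lam.
Proof.
  intro Hspec. apply NNPP. intro Hn.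
  destruct (not_in_closure_range_sep lam Hn) as [d [Hd Hsep]].
  assert (Hnz : forall v, (psi v - lam)%C <> RtoC 0)
    by (intro v; apply Cmod_gt_0; specialize (Hsep v); lra).
  apply Hspec. exists (Mult (fun v => / (psi v - lam))%C).
  split; [|split; [|split]].
  - apply bounded_op_resolvent with d; assumption.
  - intros a b f g _ _ v. unfold Mult. ring.
  - intros f _ v. unfold Mult, shift_op. field. apply Hnz.
  - intros f _ v. unfold Mult, shift_op. field. apply Hnz.
Qed.

Lemma in_closure_range_approx_point_spectrum lam :
  in_closure_range psi lam ->
  approx_point_spectrum (space o par k zero) (normk o par k) (Mult psi) lam.
Proof.
  intro Hcl.
  destruct (choice (fun (n : nat) v => Cmod (psi v - lam) < / INR (S n))) as [vs Hvs].
  { intro n. apply Hcl, Rinv_0_lt_compat, lt_0_INR. lia. }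
  exists (fun n => unit_chi (vs n)). split; [|split].
  - intro n. apply space_unit_chi.
  - intro n. apply normk_unit_chi.
  - apply (is_lim_seq_le_le (fun _ => 0) _ (fun n => / INR (S n))).
    + intro n. split; [apply normk_ge0|].
      rewrite (shift_Mult_supported_at lam (vs n)) by apply unit_chi_supported.
      eapply Rle_trans; [apply normk_cscal_le, (space_Lk false), space_unit_chi|].
      rewrite normk_unit_chi, Rmult_1_r. left. apply Hvs.
    + apply is_lim_seq_const.
    + replace (Finite 0) with (Rbar_inv p_infty) by reflexivity.
      apply is_lim_seq_inv; [|discriminate].
      apply (is_lim_seq_incr_1 INR p_infty), is_lim_seq_INR.
Qed.

Lemma point_spectrum_Mult lam :
  point_spectrum (space o par k zero) (Mult psi) lam <-> exists v, lam = psi v.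
Proof.
  split.
  - intros [f [_ [[v Hv] Heig]]]. exists v. specialize (Heig v). unfold shift_op, Mult in Heig.
    assert (Hprod : ((psi v - lam) * f v)%C = RtoC 0) by (rewrite <- Heig; ring).
    apply (f_equal Cmod) in Hprod. rewrite Cmod_mult, Cmod_0 in Hprod.
    apply Cmod_gt_0 in Hv.
    assert (Hdiff : (psi v - lam)%C = RtoC 0) by (apply Cmod_eq_0; nra).
    replace lam with (psi v - (psi v - lam))%C by ring. rewrite Hdiff. ring.
  - intros [v ->]. exists (chi v). split; [apply space_chi|split].
    + exists v. unfold chi. destruct (excluded_middle_informative (v = v)); [|congruence].
      intro E. apply (f_equal fst) in E. simpl in E. lra.
    + intro u. rewrite (shift_Mult_supported_at (psi v) v).
      * unfold cscal. ring.
      * intros w Hw. unfold chi. destruct (excluded_middle_informative (w = v)); easy.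
Qed.

End Multiplier.

End WeightedSpace.

Theorem theorem4p2 (V : Type) (o : V) (par : V -> V)
  (Htree : is_rooted_tree o par) (Hlf : locally_finite o par)
  (Hnt : no_terminal_vertices o par)
  (k : nat) (Hk : (1 <= k)%nat) (zero : bool) (psi : V -> C)
  (Hbdd : bounded_op (space o par k zero) (normk o par k) (Mult psi)) :
  (forall lam : C,
     point_spectrum (space o par k zero) (Mult psi) lam <-> exists v, lam = psi v) /\
  (forall lam : C,
     spectrum (space o par k zero) (normk o par k) (Mult psi) lam <->
     in_closure_range psi lam) /\
  (forall lam : C,
     approx_point_spectrum (space o par k zero) (normk o par k) (Mult psi) lam <->
     in_closure_range psi lam).
Proof.
  assert (Hap_sp : forall lam,
            approx_point_spectrum (space o par k zero) (normk o par k) (Mult psi) lam ->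
            spectrum (space o par k zero) (normk o par k) (Mult psi) lam)
    by (intro lam; apply approx_point_spectrum_spectrum; eapply space_shift_Mult; eassumption).
  split; [|split]; intro lam.
  - eapply point_spectrum_Mult; eassumption.
  - split.
    + eapply spectrum_in_closure_range; eassumption.
    + intro Hcl. apply Hap_sp. eapply in_closure_range_approx_point_spectrum; eassumption.
  - split.
    + intro Hap. eapply spectrum_in_closure_range; [eassumption..|]. apply Hap_sp, Hap.
    + eapply in_closure_range_approx_point_spectrum; eassumption.
Qed.
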